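(* Let $X$ be a finite poset with a unique maximal node. Suppose $Y$ is a height zero gluing of $X$ along $C\subseteq \min X$ with gluing map $g:X\to Y$. Let $x_0$ be a minimal node of $X$. Then $$\dim\big(g(x_0)^{\uparrow}_Y\big)=\max\{\dim(x^{\uparrow}_X)\mid x\in X,\ g(x)=g(x_0)\}.$$
   Context: All posets are nonempty. For $x,y$ in a poset $X$, $y$ covers $x$ (written $x<_c y$) if $x<y$ and there is no $z\in X$ with $x<z<y$. The length of a finite chain $C$ is $|C|-1$; $\dim(X)$ is the supremum of the lengths of finite chains in $X$; $\min X$ is the set of minimal elements of $X$. For $x\in X$ the up set is $x^{\uparrow}_X=\{y\in X: x\le y\}$ with the induced order. A poset map is an order-preserving map. A subset $C\subseteq X$ is complete if whenever $u,v\in C$ and $u\le y\le v$ with $y\in X$, then $y\in C$ (every subset of $\min X$ is complete). Given a surjective poset map $g:X\to Y$, a poset map $h:X\to Z$ is compatible with $g$ if $h$ is constant on $g^{-1}(y)$ for every $y\in Y$. A poset $Y$ is a gluing of $X$ with gluing map $g$ (a surjective poset map $X\to Y$) if for every poset map $h:X\to Z$ compatible with $g$ there is a unique poset map $\varphi:Y\to Z$ with $\varphi\circ g=h$. It is a gluing of $X$ along a complete subset $C$ if moreover $g$ is constant on $C$, and whenever $g(x)=g(x')$ for distinct $x,x'\in X$, both $x,x'\in C$. A height zero gluing is a gluing along some $C\subseteq\min X$. *)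

From mathcomp Require Import all_boot all_order.
Set Implicit Arguments. Unset Strict Implicit. Unset Printing Implicit Defensive.
Import Order.Theory.
Local Open Scope order_scope.

Section PosetDefs.
Context {d : Order.disp_t} {T : porderType d}.

Definition minimal (x : T) : Prop := forall y : T, ~ (y < x).
Definition maximal (x : T) : Prop := forall y : T, ~ (x < y).

(* finite chain contained in the subset S (with induced order):
   a duplicate-free list of pairwise comparable elements of S;
   its length is |C| - 1 = size s - 1. *)
Definition chain_in (S : T -> Prop) (s : seq T) : Prop :=
  [/\ uniq s, (forall x, x \in s -> S x) &
      (forall x y, x \in s -> y \in s -> (x <= y) || (y <= x))].

(* dim(S) = n : n is the supremum of the lengths of finite chains in S
   (S nonempty; a supremum in nat equal to n means attained and bounding). *)
Definition dim_eq (S : T -> Prop) (n : nat) : Prop :=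
  (exists s, chain_in S s /\ size s = n.+1) /\
  (forall s, chain_in S s -> (size s <= n.+1)%N).

Definition upset (x : T) : T -> Prop := fun y => x <= y.

Definition complete (C : T -> Prop) : Prop :=
  forall u v y : T, C u -> C v -> u <= y -> y <= v -> C y.

End PosetDefs.

Definition is_gluing {dX dY : Order.disp_t} {X : porderType dX} {Y : porderType dY}
  (g : X -> Y) : Prop :=
  [/\ {homo g : x y / x <= y},
      (forall y : Y, exists x : X, g x = y) &
      forall (dZ : Order.disp_t) (Z : porderType dZ) (h : X -> Z),
        {homo h : x y / x <= y} ->
        (forall x x' : X, g x = g x' -> h x = h x') ->
        exists! phi : Y -> Z, {homo phi : x y / x <= y} /\ (forall x, phi (g x) = h x)].

Definition gluing_along {dX dY : Order.disp_t} {X : porderType dX} {Y : porderType dY}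
  (g : X -> Y) (C : X -> Prop) : Prop :=
  [/\ is_gluing g, complete C,
      (forall c c', C c -> C c' -> g c = g c') &
      (forall x x', x <> x' -> g x = g x' -> C x /\ C x')].

Definition height_zero_gluing_along {dX dY : Order.disp_t} {X : porderType dX}
  {Y : porderType dY} (g : X -> Y) (C : X -> Prop) : Prop :=
  (forall c, C c -> minimal c) /\ gluing_along g C.

(* Points identified by g lie in C and so are minimal; hence g is injective
   on every up set, and a point of Y with two preimages is minimal in Y.
   The universal property, applied to x |-> {z | g z <= g x is witnessed by
   some comparison in X}, shows that u <= v in Y only if some preimages of u
   and v are comparable.  So a chain above g x0 lifts: its points other than
   g x0 have unique preimages, which form a chain lying above one preimage of
   g x0.  Conversely g maps chains above a preimage of g x0 injectively to
   chains above g x0. *)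
From mathcomp Require Import all_boot all_order boolp.
Import Order.Theory.
Local Open Scope order_scope.
Import Order.DefaultSetSubsetOrder.

Section PosetChains.
Context {d : Order.disp_t} {T : porderType d}.

Lemma minimal_le_eq {a b : T} : minimal b -> a <= b -> a = b.
Proof. by move=> min_b; rewrite le_eqVlt => /orP[/eqP //|/min_b]. Qed.

Lemma chain_has_min (s : seq T) :
  s != [::] -> (forall x y, x \in s -> y \in s -> (x <= y) || (y <= x)) ->
  exists2 m, m \in s & forall x, x \in s -> m <= x.
Proof.
elim: s => [//|b s IHs] _ s_cmp.
have [-> | s_nil] := eqVneq s [::].
  by exists b; rewrite ?mem_head // => x; rewrite inE => /eqP ->.
have [m ms m_min] : exists2 m, m \in s & forall x, x \in s -> m <= x.
  by apply: IHs => // x y xs ys; apply: s_cmp; rewrite inE ?xs ?ys orbT.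
have mbs : m \in b :: s by rewrite inE ms orbT.
have /orP[le_bm | le_mb] := s_cmp b m (mem_head _ _) mbs.
  exists b; first exact: mem_head.
  by move=> x; rewrite inE => /orP[/eqP -> // | /m_min]; apply: le_trans.
exists m => //.
by move=> x; rewrite inE => /orP[/eqP -> // | /m_min].
Qed.

Lemma chain_in_cons_upset (a : T) (t : seq T) :
  a \notin t -> uniq t -> (forall x, x \in t -> a <= x) ->
  (forall x y, x \in t -> y \in t -> (x <= y) || (y <= x)) ->
  chain_in (upset a) (a :: t).
Proof.
move=> a_t t_uniq a_le t_cmp; split; first by rewrite /= a_t.
  by move=> x; rewrite inE => /orP[/eqP -> | /a_le //]; apply: lexx.
move=> x y; rewrite !inE => /orP[/eqP -> | xt] /orP[/eqP -> | yt].
- by rewrite lexx.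
- by rewrite a_le.
- by rewrite a_le ?orbT.
- exact: t_cmp.
Qed.

Lemma dim_eq_exists (S : T -> Prop) {x : T} {B : nat} :
  S x -> (forall s, chain_in S s -> (size s <= B)%N) -> exists n, dim_eq S n.
Proof.
move=> Sx bounded.
pose has_chain k := `[< exists s, chain_in S s /\ size s = k.+1 >].
have has_chain0 : exists k, has_chain k.
  exists 0%N; apply/asboolP; exists [:: x]; split => //; split => //.
  - by move=> y; rewrite inE => /eqP ->.
  - by move=> y z; rewrite !inE => /eqP -> /eqP ->; rewrite lexx.
have has_chain_le k : has_chain k -> (k <= B)%N.
  by move=> /asboolP[s [/bounded + s_size]]; rewrite s_size; apply: ltnW.
case: (ex_maxnP has_chain0 has_chain_le) => n /asboolP n_chain n_max.
exists n; split => // s s_chain; case s_size: (size s) => [// | k].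
by rewrite ltnS; apply: n_max; apply/asboolP; exists s.
Qed.

End PosetChains.

Section HeightZeroGluing.
Context {dX dY : Order.disp_t} {X : finPOrderType dX} {Y : porderType dY}.
Context {g : X -> Y} {C : X -> Prop}.
Hypothesis C_minimal : forall c, C c -> minimal c.
Hypothesis g_inj_off : forall x x', x <> x' -> g x = g x' -> C x /\ C x'.

Definition lift_le (u v : Y) : bool :=
  [exists a, exists b, [&& g a == u, g b == v & a <= b]].

Lemma lift_leP u v :
  reflect (exists a b, [/\ g a = u, g b = v & a <= b]) (lift_le u v).
Proof.
apply: (iffP existsP) => [[a /existsP[b /and3P[/eqP ga /eqP gb ab]]] | [a [b [ga gb ab]]]].
  by exists a, b.
by exists a; apply/existsP; exists b; rewrite ga gb !eqxx.
Qed.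

(* Two lifts can only be glued in the middle at a point of C, which, being
   minimal, is the bottom of the second lift. *)
Lemma lift_le_trans : transitive lift_le.
Proof.
move=> v u w /lift_leP[a [b [<- gb ab]]] /lift_leP[b' [c [gb' <- b'c]]].
apply/lift_leP; have [eq_bb' | nb] := eqVneq b b'.
  by exists a, c; split => //; apply: le_trans ab _; rewrite eq_bb'.
have [Cb _] := g_inj_off _ _ (elimN eqP nb) (etrans gb (esym gb')).
by exists b', c; split => //; rewrite gb' -gb (minimal_le_eq (C_minimal _ Cb) ab).
Qed.

Lemma g_inj_upset {x a b : X} : x <= a -> x <= b -> g a = g b -> a = b.
Proof.
move=> xa xb gab; apply/eqP/negPn/negP => /eqP nab.
have [Ca Cb] := g_inj_off _ _ nab gab.
apply: nab.
by rewrite -(minimal_le_eq (C_minimal _ Ca) xa) (minimal_le_eq (C_minimal _ Cb) xb).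
Qed.

Hypothesis g_gluing : is_gluing g.

Lemma g_homo : {homo g : x y / x <= y}.
Proof. by case: g_gluing. Qed.

Lemma g_surj (y : Y) : exists x, g x = y.
Proof. by case: g_gluing. Qed.

Lemma le_lift {u v : Y} : u <= v -> exists a b, [/\ g a = u, g b = v & a <= b].
Proof.
have [[a <-] [b <-]] := (g_surj u, g_surj v); move=> uv.
case: g_gluing => _ _ univ.
pose h x : {set X} := [set z | lift_le (g z) (g x)].
have h_homo : {homo h : x y / x <= y}.
  move=> x y xy; apply/subsetP => z; rewrite !inE => /lift_le_trans; apply.
  by apply/lift_leP; exists x, y.
have h_compat x x' : g x = g x' -> h x = h x' by rewrite /h => ->.
have [phi [[phi_homo phi_g] _]] := univ _ _ h h_homo h_compat.
move: (phi_homo _ _ uv); rewrite !phi_g => /subsetP/(_ a).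
rewrite !inE => /(_ _)/lift_leP; apply; apply/lift_leP; by exists a, a.
Qed.

Lemma le_glued_fiber_eq {b b' : X} {u : Y} :
  b != b' -> g b = g b' -> u <= g b -> u = g b.
Proof.
move=> nbb' gbb' /le_lift[a [c [<- gc ac]]].
have Cc : C c.
  have [-> | ncb] := eqVneq c b; first by case: (g_inj_off _ _ (elimN eqP nbb') gbb').
  by case: (g_inj_off _ _ (elimN eqP ncb) gc).
by rewrite -gc (minimal_le_eq (C_minimal _ Cc) ac).
Qed.

Lemma fiber_uniq_gt {v : Y} {b b' : X} : v < g b -> g b = g b' -> b = b'.
Proof.
move=> vb gbb'; apply/eqP/negPn/negP => nbb'.
have v_eq := le_glued_fiber_eq nbb' gbb' (ltW vb).
by rewrite v_eq ltxx in vb.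
Qed.

Lemma le_lift_gt {v : Y} {b c : X} : v < g b -> g b <= g c -> b <= c.
Proof.
move=> vb bc; have vc : v < g c := lt_le_trans vb bc.
have [a [c' [ga gc' ac']]] := le_lift bc.
by rewrite (fiber_uniq_gt vb (esym ga)) (fiber_uniq_gt vc (esym gc')).
Qed.

Lemma chain_map_upset (x : X) (t : seq X) :
  chain_in (upset x) t -> chain_in (upset (g x)) (map g t).
Proof.
move=> [t_uniq t_up t_cmp]; split.
- by rewrite map_inj_in_uniq // => a b ta tb; apply: g_inj_upset (t_up _ ta) (t_up _ tb).
- by move=> _ /mapP[a ta ->]; apply: g_homo; apply: t_up.
- move=> _ _ /mapP[a ta ->] /mapP[b tb ->].
  by case/orP: (t_cmp _ _ ta tb) => /g_homo ->; rewrite ?orbT.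
Qed.

Definition pick_preimage (x0 : X) (y : Y) : X := odflt x0 [pick x | g x == y].

Lemma pick_preimageK (x0 : X) : cancel (pick_preimage x0) g.
Proof.
move=> y; rewrite /pick_preimage; case: pickP => [x /eqP // | no_preimage].
by have [x gx] := g_surj y; move: (no_preimage x); rewrite gx eqxx.
Qed.

Lemma chain_lift_upset (x0 : X) (s : seq Y) :
  chain_in (upset (g x0)) s ->
  exists x t, [/\ g x = g x0, chain_in (upset x) t & (size s <= size t)%N].
Proof.
move=> [s_uniq s_up s_cmp]; set y0 := g x0.
pose f := pick_preimage x0; pose s' := rem y0 s.
have fK : cancel f g := pick_preimageK x0.
have mem_s' y : (y \in s') = (y != y0) && (y \in s) by rewrite mem_rem_uniq.
have gt_s' y : y \in s' -> y0 < g (f y).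
  by rewrite mem_s' fK => /andP[ne ys]; rewrite lt_neqAle eq_sym ne s_up.
have le_f y z : y \in s' -> y <= z -> f y <= f z.
  by move=> /gt_s' y0_lt yz; apply: le_lift_gt y0_lt _; rewrite !fK.
have s'_cmp y z : y \in s' -> z \in s' -> (y <= z) || (z <= y).
  by rewrite !mem_s' => /andP[_ ys] /andP[_ zs]; apply: s_cmp.
have [a ga a_le] : exists2 a, g a = y0 & forall y, y \in s' -> a <= f y.
  have [-> | s'_nonnil] := eqVneq s' [::]; first by exists x0.
  have [m ms' m_min] := chain_has_min s' s'_nonnil s'_cmp.
  have [a [c [ga gc ac]]] := le_lift (ltW (gt_s' m ms')).
  have fm_c : f m = c := fiber_uniq_gt (gt_s' m ms') (esym gc).
  by exists a => // y ys'; rewrite (le_trans ac) // -fm_c le_f ?m_min.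
exists a, (a :: map f s'); split => //.
- apply: chain_in_cons_upset.
  + by apply/mapP => -[y ys' a_fy]; move: (gt_s' y ys'); rewrite -a_fy ga ltxx.
  + by rewrite (map_inj_uniq (can_inj fK)) rem_uniq.
  + by move=> _ /mapP[y ys' ->]; apply: a_le.
  + move=> _ _ /mapP[y ys' ->] /mapP[z zs' ->].
    case/orP: (s'_cmp y z ys' zs') => [yz | zy]; first by rewrite le_f.
    by rewrite (le_f z) ?orbT.
- rewrite /= size_map /s'.
  by case: (boolP (y0 \in s)) => [/size_rem -> | /rem_id ->]; case: (size s).
Qed.

End HeightZeroGluing.

Theorem mainTheorem1 (dX dY : Order.disp_t) (X : finPOrderType dX) (Y : porderType dY)
  (g : X -> Y) (C : X -> Prop) (x0 : X) :
  (exists m : X, maximal m /\ forall m' : X, maximal m' -> m' = m) ->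
  height_zero_gluing_along g C ->
  minimal x0 ->
  exists n : nat,
    dim_eq (upset (g x0)) n /\
    (exists x : X, g x = g x0 /\ dim_eq (upset x) n) /\
    (forall (x : X) (m : nat), g x = g x0 -> dim_eq (upset x) m -> (m <= n)%N).
Proof.
move=> _ [C_minimal [g_gluing _ _ g_inj_off]] _.
have lift := chain_lift_upset C_minimal g_inj_off g_gluing x0.
have bounded s : chain_in (upset (g x0)) s -> (size s <= #|X|)%N.
  move=> /lift[x [t [_ [t_uniq _ _] le_st]]].
  by rewrite (leq_trans le_st) // -(card_uniqP t_uniq) max_card.
have [n dim_n] := dim_eq_exists (upset (g x0)) (lexx _) bounded.
have map_bound x t : g x = g x0 -> chain_in (upset x) t -> (size t <= n.+1)%N.
  move=> gx /(chain_map_upset C_minimal g_inj_off g_gluing).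
  by rewrite gx => /dim_n.2; rewrite size_map.
exists n; split => //; split.
- have [s [s_chain s_size]] := dim_n.1.
  have [x [t [gx t_chain le_st]]] := lift s s_chain.
  exists x; split => //; split => [|t']; last exact: map_bound gx.
  by exists t; split => //; apply/eqP; rewrite eqn_leq (map_bound x) // -s_size le_st.
- move=> x m gx [[t [t_chain t_size]] _].
  by rewrite -ltnS -t_size (map_bound x).
Qed.
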